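(* Assume ({\bf A}($\gamma,\nu$)) with $\nu\in(0,1)$. For every $\kappa\in(\nu,1)$ there exist constants $C>0$, $c_\kappa>0$, $C_\kappa>0$ such that for all $v,V\in\mathbb R^2$: $$\int_{-\pi/2}^{\pi/2}\Big(e^{|V+A(\theta)(V-v)|^\kappa}-e^{|V|^\kappa}\Big)b(\theta)d\theta\le e^{|V|^\kappa}\Big[-c_\kappa\mathbf 1_{\{|V|\ge1,\ |V|\ge C|v|\}}+C_\kappa(|V|\vee1)^{\kappa+\nu-2}e^{C_\kappa|v|^\kappa}\Big],$$ $$\int_{-\pi/2}^{\pi/2}\Big|e^{|V+A(\theta)(V-v)|^\kappa}-e^{|V|^\kappa}\Big|b(\theta)d\theta\le C_\kappa e^{C_\kappa|v|^\kappa}e^{C_\kappa|V|^\kappa}.$$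
   Context: Assumption ({\bf A}($\gamma,\nu$)): the cross section is $B(|v-v_*|,\theta)=|v-v_*|^\gamma b(\theta)$, where $b:[-\pi/2,\pi/2]\setminus\{0\}\to\mathbb R_+$ is an even smooth function such that for some $0<c<C$, $c\theta^{-1-\nu}\le b(\theta)\le C\theta^{-1-\nu}$ for all $\theta\in(0,\pi/2]$, and for every $k\ge1$ there is $C_k$ with $|b^{(k)}(\theta)|\le C_k\theta^{-1-\nu-k}$ for $\theta\in(0,\pi/2]$. $A(\theta)=\frac12(R_\theta-I)$, where $R_\theta$ is the rotation of angle $\theta$ in $\mathbb R^2$. *)

From Stdlib Require Import Reals Lra.
Open Scope R_scope.

Definition vec2 := (R * R)%type.

Definition vnorm (w : vec2) : R := sqrt (fst w * fst w + snd w * snd w).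

Definition vadd (w z : vec2) : vec2 := (fst w + fst z, snd w + snd z).
Definition vsub (w z : vec2) : vec2 := (fst w - fst z, snd w - snd z).

(* A(theta) = (R_theta - I)/2 applied to w, R_theta the rotation of angle theta. *)
Definition Amat (theta : R) (w : vec2) : vec2 :=
  (((cos theta - 1) * fst w - sin theta * snd w) / 2,
   (sin theta * fst w + (cos theta - 1) * snd w) / 2).

(* Real power x^a for x >= 0, with the convention 0^a = 0 (used only for a > 0
   at x = 0); Stdlib's Rpower 0 a would be 1. *)
Definition rpow (x a : R) : R :=
  if Req_EM_T x 0 then 0 else Rpower x a.

Definition int_on (F : R -> R) (a b v : R) : Prop :=
  exists pr : Riemann_integrable F a b, RiemannInt pr = v.

(* Improper integral over [-pi/2, pi/2] with a (possible) singularity at 0: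
   I = lim_{e -> 0+} ( int_{-pi/2}^{-e} F + int_{e}^{pi/2} F ). *)
Definition improper_int_sym (F : R -> R) (I : R) : Prop :=
  exists Lf Rf : R -> R,
    (forall e, 0 < e < PI / 2 ->
       int_on F (- (PI / 2)) (- e) (Lf e) /\ int_on F e (PI / 2) (Rf e)) /\
    (forall eps, 0 < eps -> exists delta, 0 < delta /\
       forall e, 0 < e < delta -> e < PI / 2 -> Rabs (Lf e + Rf e - I) < eps).

(* Assumption A(gamma,nu) on the angular kernel b (gamma plays no role here). *)
Definition assumption_A (nu : R) (b : R -> R) : Prop :=
  (forall theta, 0 < Rabs theta <= PI / 2 -> b (- theta) = b theta) /\
  (exists c C, 0 < c < C /\
     forall theta, 0 < theta <= PI / 2 ->
       c * rpow theta (-1 - nu) <= b theta <= C * rpow theta (-1 - nu)) /\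
  (exists d : nat -> R -> R,
     (forall theta, d O theta = b theta) /\
     (forall k theta, 0 < Rabs theta <= PI / 2 ->
        derivable_pt_lim (d k) theta (d (S k) theta)) /\
     (forall k, (1 <= k)%nat -> exists Ck, forall theta, 0 < theta <= PI / 2 ->
        Rabs (d k theta) <= Ck * rpow theta (-1 - nu - INR k))).


Definition indic_far (C : R) (v V : vec2) : R :=
  if Rle_dec 1 (vnorm V) then
    (if Rle_dec (C * vnorm v) (vnorm V) then 1 else 0)
  else 0.

Definition expdiff (kappa : R) (v V : vec2) (theta : R) : R :=
  exp (rpow (vnorm (vadd V (Amat theta (vsub V v)))) kappa)
  - exp (rpow (vnorm V) kappa).

From Stdlib Require Import Reals Lra ClassicalEpsilon Classical FunctionalExtensionality.
Open Scope R_scope.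

(* Write V' = V + A(th)(V - v).  Since | |V'| - |V| | <= |th| (|V| + |v|) / 2 and [z |-> z^k] is
   subadditive, |e^{|V'|^k} - e^{|V|^k}| <= e^{2|V|^k + 2|v|^k} |th|^k; with b ~ |th|^{-1-nu} and
   k > nu both integrands are dominated by |th|^{k-nu-1}, so the improper integrals exist and
   are crude-bounded, which gives the second estimate and the first one unless
   |V| >= 1 and |V| >= 64|v|.  In that far regime the identity
   |V'|^2 = |V|^2 - (1 - cos th)(|V|^2 - |v|^2)/2 + sin th (V x v) and concavity of [z |-> z^k]
   give |V'|^k - |V|^k <= k |V|^{k-1} (- |V| th^2 / 40 + |th| |v| / 2): the integrand is
   nonpositive for |th| >= 40|v|/|V|, is O(|th|^{-nu}) below that angle (which produces the
   (|V| v 1)^{k+nu-2} term), and is uniformly negative for |th| >= pi/4 (the - c_k term). *)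

Lemma rpow_Rpower x a : 0 < x -> rpow x a = Rpower x a.
Proof. intro Hx; unfold rpow; destruct (Req_EM_T x 0); [lra | reflexivity]. Qed.

Lemma rpow_0_l a : rpow 0 a = 0.
Proof. unfold rpow; destruct (Req_EM_T 0 0); [reflexivity | lra]. Qed.

Lemma rpow_ge_0 x a : 0 <= rpow x a.
Proof. unfold rpow; destruct (Req_EM_T x 0); [lra | left; apply exp_pos]. Qed.

Lemma rpow_gt_0 x a : 0 < x -> 0 < rpow x a.
Proof. intro Hx; rewrite rpow_Rpower by exact Hx; apply exp_pos. Qed.

Lemma rpow_1_l a : rpow 1 a = 1.
Proof. rewrite rpow_Rpower by lra; unfold Rpower; rewrite ln_1, Rmult_0_r; apply exp_0. Qed.

Lemma rpow_1_r x : 0 <= x -> rpow x 1 = x.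
Proof.
  intro Hx; destruct (Req_dec x 0) as [-> | Hx0]; [apply rpow_0_l |].
  rewrite rpow_Rpower by lra; apply Rpower_1; lra.
Qed.

Lemma rpow_0_r x : 0 < x -> rpow x 0 = 1.
Proof. intro Hx; rewrite rpow_Rpower by exact Hx; apply Rpower_O, Hx. Qed.

Lemma rpow_le_base x y a : 0 <= x <= y -> 0 < a -> rpow x a <= rpow y a.
Proof.
  intros Hxy Ha; destruct (Req_dec x 0) as [-> | Hx].
  - rewrite rpow_0_l; apply rpow_ge_0.
  - rewrite !rpow_Rpower by lra; apply Rle_Rpower_l; lra.
Qed.

Lemma rpow_lt_base x y a : 0 <= x < y -> 0 < a -> rpow x a < rpow y a.
Proof.
  intros Hxy Ha; destruct (Req_dec x 0) as [-> | Hx].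
  - rewrite rpow_0_l; apply rpow_gt_0; lra.
  - rewrite !rpow_Rpower by lra; apply Rlt_Rpower_l; lra.
Qed.

Lemma rpow_le_exponent x a b : 1 <= x -> a <= b -> rpow x a <= rpow x b.
Proof. intros Hx Hab; rewrite !rpow_Rpower by lra; apply Rle_Rpower; assumption. Qed.

Lemma rpow_mult_distr x y a : 0 <= x -> 0 <= y -> rpow (x * y) a = rpow x a * rpow y a.
Proof.
  intros Hx Hy.
  destruct (Req_dec x 0) as [-> | Hx0]; [rewrite Rmult_0_l, rpow_0_l; ring |].
  destruct (Req_dec y 0) as [-> | Hy0]; [rewrite Rmult_0_r, rpow_0_l; ring |].
  rewrite !rpow_Rpower by nra; symmetry; apply Rpower_mult_distr; lra.
Qed.

Lemma rpow_plus x a b : 0 < x -> rpow x (a + b) = rpow x a * rpow x b.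
Proof. intro Hx; rewrite !rpow_Rpower by exact Hx; apply Rpower_plus. Qed.

Lemma rpow_mul_self x a : 0 < x -> rpow x a * x = rpow x (a + 1).
Proof. intro Hx; rewrite rpow_plus, rpow_1_r by lra; reflexivity. Qed.

Lemma rpow_rpow x a b : 0 <= x -> rpow (rpow x a) b = rpow x (a * b).
Proof.
  intro Hx; destruct (Req_dec x 0) as [-> | Hx0]; [rewrite !rpow_0_l; reflexivity |].
  rewrite (rpow_Rpower x a), !rpow_Rpower by (try apply exp_pos; lra).
  apply Rpower_mult.
Qed.

Lemma rpow_Rinv x a : 0 < x -> rpow (/ x) a = rpow x (- a).
Proof.
  intro Hx; rewrite !rpow_Rpower by (try apply Rinv_0_lt_compat; lra).
  unfold Rpower; rewrite ln_Rinv by lra; f_equal; ring.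
Qed.

Lemma rpow_inv_exponent x a : 0 <= x -> 0 < a -> rpow (rpow x (/ a)) a = x.
Proof. intros Hx Ha; rewrite rpow_rpow, Rinv_l, rpow_1_r by lra; reflexivity. Qed.

Lemma exp_le_mono x y : x <= y -> exp x <= exp y.
Proof. intros [H | ->]; [left; apply exp_increasing, H | lra]. Qed.

Lemma exp_tangent_le x y : exp x * (1 + (y - x)) <= exp y.
Proof.
  replace y with (x + (y - x)) at 2 by ring; rewrite exp_plus.
  apply Rmult_le_compat_l; [left; apply exp_pos | apply exp_ineq1_le].
Qed.

Lemma exp_convex k x y : 0 <= k <= 1 ->
  exp (k * x + (1 - k) * y) <= k * exp x + (1 - k) * exp y.
Proof.
  intro Hk; set (m := k * x + (1 - k) * y).
  pose proof (exp_tangent_le m x); pose proof (exp_tangent_le m y).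
  assert (exp m = k * (exp m * (1 + (x - m))) + (1 - k) * (exp m * (1 + (y - m))))
    by (unfold m; ring).
  nra.
Qed.

Lemma exp_sub_le_abs x y z : x <= z -> y <= z -> Rabs (exp x - exp y) <= exp z * Rabs (x - y).
Proof.
  assert (Hle : forall p s, s <= p -> p <= z -> exp p - exp s <= exp z * (p - s)).
  { intros p s Hsp Hpz. pose proof (exp_tangent_le p s); pose proof (exp_le_mono _ _ Hpz). nra. }
  intros Hx Hy; destruct (Rle_dec y x) as [Hyx | Hxy].
  - pose proof (exp_le_mono _ _ Hyx).
    rewrite !Rabs_right by lra; apply Hle; lra.
  - pose proof (exp_le_mono x y ltac:(lra)).
    rewrite Rabs_left1, Rabs_left by lra.
    replace (- (exp x - exp y)) with (exp y - exp x) by ring.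
    replace (- (x - y)) with (y - x) by ring; apply Hle; lra.
Qed.

Lemma exp_sub_1_le x : 0 <= x -> exp x - 1 <= x * exp x.
Proof. intro Hx; pose proof (exp_tangent_le x 0); rewrite exp_0 in *; nra. Qed.

Lemma Rpower_le_linear z k : 0 < z -> 0 <= k <= 1 -> Rpower z k <= 1 + k * (z - 1).
Proof.
  intros Hz Hk; unfold Rpower.
  replace (k * ln z) with (k * ln z + (1 - k) * 0) by ring.
  eapply Rle_trans; [apply exp_convex, Hk |].
  rewrite exp_ln, exp_0 by exact Hz; lra.
Qed.
Lemma rpow_concave_tangent x y k : 0 <= x -> 0 < y -> 0 < k < 1 ->
  rpow x k <= rpow y k + k * rpow y (k - 1) * (x - y).
Proof.
  intros Hx Hy Hk.
  assert (Hyk : rpow y (k - 1) * y = rpow y k)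
    by (rewrite rpow_mul_self by exact Hy; f_equal; ring).
  assert (Hpos : 0 < rpow y k) by (apply rpow_gt_0, Hy).
  destruct (Req_dec x 0) as [-> | Hx0]; [rewrite rpow_0_l; nra |].
  assert (Hz : 0 < x / y) by (apply Rdiv_lt_0_compat; lra).
  pose proof (Rpower_le_linear (x / y) k Hz ltac:(lra)) as Hlin.
  replace x with (y * (x / y)) by (field; lra).
  rewrite rpow_mult_distr, (rpow_Rpower (x / y)) by lra.
  replace (k * rpow y (k - 1) * (y * (x / y) - y))
    with (k * (rpow y (k - 1) * y) * (x / y - 1)) by ring.
  rewrite Hyk; nra.
Qed.

Lemma rpow_ge_self z k : 0 <= z <= 1 -> 0 < k <= 1 -> z <= rpow z k.
Proof.
  intros Hz Hk; destruct (Req_dec z 0) as [-> | Hz0]; [rewrite rpow_0_l; lra |].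
  rewrite rpow_Rpower by lra; unfold Rpower.
  assert (Hln : ln z <= 0).
  { destruct (Req_dec z 1) as [-> | Hz1]; [rewrite ln_1; lra |].
    rewrite <- ln_1; left; apply ln_increasing; lra. }
  rewrite <- (exp_ln z) at 1 by lra; apply exp_le_mono; nra.
Qed.

Lemma rpow_subadditive x y k : 0 <= x -> 0 <= y -> 0 < k <= 1 ->
  rpow (x + y) k <= rpow x k + rpow y k.
Proof.
  intros Hx Hy Hk.
  destruct (Req_dec x 0) as [-> | Hx0]; [rewrite Rplus_0_l, rpow_0_l; lra |].
  destruct (Req_dec y 0) as [-> | Hy0]; [rewrite Rplus_0_r, rpow_0_l; lra |].
  set (s := x + y); assert (Hs : 0 < s) by (unfold s; lra).
  assert (Hscale : forall w, 0 <= w <= s -> rpow w k = rpow s k * rpow (w / s) k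
                             /\ w / s <= rpow (w / s) k).
  { intros w Hw.
    assert (Hws : 0 <= w / s) by (apply Rmult_le_pos; [lra | left; apply Rinv_0_lt_compat, Hs]).
    split.
    - rewrite <- rpow_mult_distr by lra; f_equal; field; lra.
    - apply rpow_ge_self; [split; [exact Hws |] | lra].
      apply Rmult_le_reg_r with s; [exact Hs |].
      unfold Rdiv; rewrite Rmult_assoc, Rinv_l; lra. }
  destruct (Hscale x ltac:(unfold s; lra)) as [Ex Lx].
  destruct (Hscale y ltac:(unfold s; lra)) as [Ey Ly].
  assert (x / s + y / s = 1) by (unfold s; field; lra).
  pose proof (rpow_gt_0 s k Hs).
  rewrite Ex, Ey; nra.
Qed.

Lemma rpow_sub_abs_le x y k : 0 <= x -> 0 <= y -> 0 < k <= 1 ->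
  Rabs (rpow x k - rpow y k) <= rpow (Rabs (x - y)) k.
Proof.
  intros Hx Hy Hk.
  assert (Hle : forall s t, 0 <= s <= t -> Rabs (rpow t k - rpow s k) <= rpow (t - s) k).
  { intros s t Hst. pose proof (rpow_le_base s t k Hst ltac:(lra)).
    pose proof (rpow_subadditive s (t - s) k ltac:(lra) ltac:(lra) Hk).
    replace (s + (t - s)) with t in * by ring.
    rewrite Rabs_right; lra. }
  destruct (Rle_dec y x).
  - rewrite (Rabs_right (x - y)) by lra; apply Hle; lra.
  - rewrite Rabs_minus_sym, (Rabs_left1 (x - y)) by lra.
    replace (- (x - y)) with (y - x) by ring; apply Hle; lra.
Qed.

(* [(q/e)^q], with [q = m/k], is the maximum of [t^q e^(-t)] over [t >= 0]. *)
Definition rpow_exp_sup (m k : R) : R := exp (m / k * (ln (m / k) - 1)).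

Lemma rpow_exp_sup_gt_0 m k : 0 < rpow_exp_sup m k.
Proof. apply exp_pos. Qed.

Lemma rpow_le_rpow_exp_sup m k x : 0 < m -> 0 < k -> 0 <= x ->
  rpow x m <= rpow_exp_sup m k * exp (rpow x k).
Proof.
  intros Hm Hk Hx; unfold rpow_exp_sup; set (q := m / k).
  assert (Hq : 0 < q) by (apply Rdiv_lt_0_compat; assumption).
  destruct (Req_dec x 0) as [-> | Hx0].
  { rewrite rpow_0_l; left; apply Rmult_lt_0_compat; apply exp_pos. }
  set (t := rpow x k); assert (Ht : 0 < t) by (apply rpow_gt_0; lra).
  replace (rpow x m) with (rpow t q) by (unfold t, q; rewrite rpow_rpow by lra; f_equal; field; lra).
  rewrite rpow_Rpower by exact Ht; unfold Rpower; rewrite <- exp_plus; apply exp_le_mono.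
  assert (Hl : ln (t / q) <= t / q - 1).
  { pose proof (exp_ineq1_le (ln (t / q))). rewrite exp_ln in * by (apply Rdiv_lt_0_compat; lra). lra. }
  unfold Rdiv in Hl; rewrite ln_mult, ln_Rinv in Hl by (try apply Rinv_0_lt_compat; lra).
  assert (q * ln t <= q * (t * / q - 1 + ln q)) by (apply Rmult_le_compat_l; lra).
  replace (q * (t * / q - 1 + ln q)) with (q * (ln q - 1) + t) in * by (field; lra).
  lra.
Qed.

Lemma vnorm_ge_0 w : 0 <= vnorm w.
Proof. apply sqrt_pos. Qed.

Lemma vnorm_sq w : vnorm w * vnorm w = fst w * fst w + snd w * snd w.
Proof. apply sqrt_sqrt; nra. Qed.

Lemma Rabs_le_inv x b : Rabs x <= b -> - b <= x <= b.
Proof. unfold Rabs; destruct (Rcase_abs x); lra. Qed.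

Lemma Rle_of_sq a b : 0 <= b -> a * a <= b * b -> a <= b.
Proof. intros; nra. Qed.

Lemma Rabs_le_of_sq a b : 0 <= b -> a * a <= b * b -> Rabs a <= b.
Proof. intros; apply Rabs_le; split; nra. Qed.

(* Cauchy-Schwarz, through Lagrange's identity for [(x.y)^2 + (x^y)^2]. *)
Lemma dot_cross_le_vnorm x y :
  Rabs (fst x * fst y + snd x * snd y) <= vnorm x * vnorm y /\
  Rabs (fst x * snd y - snd x * fst y) <= vnorm x * vnorm y.
Proof.
  pose proof (vnorm_sq x) as Ex; pose proof (vnorm_sq y) as Ey.
  pose proof (vnorm_ge_0 x); pose proof (vnorm_ge_0 y).
  destruct x as [x1 x2], y as [y1 y2]; simpl in *.
  assert (Hprod : (vnorm (x1, x2) * vnorm (y1, y2)) * (vnorm (x1, x2) * vnorm (y1, y2))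
                  = (x1 * y1 + x2 * y2) * (x1 * y1 + x2 * y2)
                    + (x1 * y2 - x2 * y1) * (x1 * y2 - x2 * y1)).
  { transitivity ((vnorm (x1, x2) * vnorm (x1, x2)) * (vnorm (y1, y2) * vnorm (y1, y2)));
      [ring | rewrite Ex, Ey; ring]. }
  assert (0 <= vnorm (x1, x2) * vnorm (y1, y2)) by (apply Rmult_le_pos; assumption).
  split; apply Rabs_le_of_sq; try assumption; rewrite Hprod;
    [pose proof (Rle_0_sqr (x1 * y2 - x2 * y1)) | pose proof (Rle_0_sqr (x1 * y1 + x2 * y2))];
    unfold Rsqr in *; lra.
Qed.

Lemma vnorm_sub_sq x y : vnorm (vsub x y) * vnorm (vsub x y)
  = vnorm x * vnorm x - 2 * (fst x * fst y + snd x * snd y) + vnorm y * vnorm y.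
Proof. rewrite !vnorm_sq; destruct x, y; simpl; ring. Qed.

Lemma vnorm_sub_ge x y : Rabs (vnorm x - vnorm y) <= vnorm (vsub x y).
Proof.
  destruct (dot_cross_le_vnorm x y) as [Hdot _]; apply Rabs_le_inv in Hdot.
  pose proof (vnorm_sub_sq x y); pose proof (vnorm_ge_0 (vsub x y)).
  pose proof (vnorm_ge_0 x); pose proof (vnorm_ge_0 y).
  apply Rabs_le; split; nra.
Qed.

Lemma vnorm_sub_le x y : vnorm (vsub x y) <= vnorm x + vnorm y.
Proof.
  destruct (dot_cross_le_vnorm x y) as [Hdot _]; apply Rabs_le_inv in Hdot.
  pose proof (vnorm_sub_sq x y); pose proof (vnorm_ge_0 x); pose proof (vnorm_ge_0 y).
  apply Rle_of_sq; nra.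
Qed.

Definition post_velocity (v V : vec2) (th : R) : vec2 := vadd V (Amat th (vsub V v)).

Definition cross (v V : vec2) : R := fst V * snd v - snd V * fst v.

Lemma post_velocity_norm_sq v V th :
  vnorm (post_velocity v V th) * vnorm (post_velocity v V th) =
  vnorm V * vnorm V - (1 - cos th) * (vnorm V * vnorm V - vnorm v * vnorm v) / 2
  + sin th * cross v V.
Proof.
  rewrite !vnorm_sq; destruct v as [v1 v2], V as [V1 V2].
  unfold post_velocity, cross, Amat, vadd, vsub; simpl.
  pose proof (sin2_cos2 th) as Hsc; unfold Rsqr in Hsc.
  assert (Hs : sin th * sin th = 1 - cos th * cos th) by lra.
  transitivity (V1 * V1 + V2 * V2 - (1 - cos th) * (V1 * V1 + V2 * V2 - (v1 * v1 + v2 * v2)) / 2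
                + sin th * (V1 * v2 - V2 * v1)
                + (sin th * sin th - (1 - cos th * cos th))
                  * ((V1 - v1) * (V1 - v1) + (V2 - v2) * (V2 - v2)) / 4);
    [field | rewrite Hs; field].
Qed.

Lemma Rabs_cross_le v V : Rabs (cross v V) <= vnorm V * vnorm v.
Proof. apply (dot_cross_le_vnorm V v). Qed.

Lemma cos_ge_quadratic th : - (PI / 2) <= th <= PI / 2 -> 1 - th * th / 2 <= cos th.
Proof.
  intro Hth; destruct (cos_bound th 0 ltac:(lra) ltac:(lra)) as [H _].
  unfold cos_approx, cos_term in H; simpl in H; lra.
Qed.

Lemma cos_le_quadratic th : - (PI / 2) <= th <= PI / 2 -> cos th <= 1 - th * th / 5.
Proof.
  intro Hth; destruct (cos_bound th 0 ltac:(lra) ltac:(lra)) as [_ H].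
  unfold cos_approx, cos_term in H; simpl in H.
  pose proof PI_4; assert (th * th <= 4) by nra; nra.
Qed.

Lemma Rabs_sin_le th : Rabs (sin th) <= Rabs th.
Proof.
  assert (Hpos : forall t, 0 <= t -> Rabs (sin t) <= t).
  { intros t Ht; pose proof (SIN_bound t); apply Rabs_le; split.
    - destruct (Rle_dec 1 t); [lra |].
      pose proof (sin_ge_0 t Ht ltac:(pose proof PI2_3_2; lra)); lra.
    - destruct (Req_dec t 0) as [-> | Ht0]; [rewrite sin_0; lra |].
      left; apply sin_lt_x; lra. }
  destruct (Rle_dec 0 th).
  - rewrite (Rabs_right th) by lra; apply Hpos; lra.
  - rewrite <- Rabs_Ropp, <- sin_neg, (Rabs_left th) by lra; apply Hpos; lra.
Qed.

Lemma post_velocity_norm_le v V th : vnorm (post_velocity v V th) <= vnorm V + vnorm v.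
Proof.
  pose proof (post_velocity_norm_sq v V th) as Hsq.
  pose proof (Rabs_cross_le v V); pose proof (COS_bound th); pose proof (SIN_bound th).
  pose proof (vnorm_ge_0 V); pose proof (vnorm_ge_0 v).
  set (a := vnorm V) in *; set (r := vnorm v) in *.
  assert (Hs : Rabs (sin th * cross v V) <= a * r).
  { rewrite Rabs_mult, <- (Rmult_1_l (a * r)).
    apply Rmult_le_compat; try apply Rabs_pos; [| assumption].
    apply Rabs_le; lra. }
  apply Rabs_le_inv in Hs.
  apply Rle_of_sq; [lra |]; rewrite Hsq.
  (* |post_velocity|^2 is a convex combination of a^2 and r^2, plus the cross term *)
  set (k := (1 - cos th) / 2); assert (0 <= k <= 1) by (unfold k; lra).
  replace (a * a - (1 - cos th) * (a * a - r * r) / 2) with ((1 - k) * (a * a) + k * (r * r))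
    by (unfold k; field).
  nra.
Qed.

Lemma vnorm_Amat_le th W : - (PI / 2) <= th <= PI / 2 ->
  vnorm (Amat th W) <= Rabs th * vnorm W / 2.
Proof.
  intro Hth.
  assert (E : vnorm (Amat th W) * vnorm (Amat th W) = (1 - cos th) / 2 * (vnorm W * vnorm W)).
  { rewrite !vnorm_sq; destruct W as [w1 w2]; unfold Amat; simpl.
    pose proof (sin2_cos2 th) as Hsc; unfold Rsqr in Hsc.
    assert (Hs : sin th * sin th = 1 - cos th * cos th) by lra.
    transitivity ((1 - cos th) / 2 * (w1 * w1 + w2 * w2)
                  + (sin th * sin th - (1 - cos th * cos th)) * (w1 * w1 + w2 * w2) / 4);
      [field | rewrite Hs; field]. }
  pose proof (cos_ge_quadratic th Hth); pose proof (vnorm_ge_0 W); pose proof (Rabs_pos th).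
  apply Rle_of_sq; [nra |].
  replace (Rabs th * vnorm W / 2 * (Rabs th * vnorm W / 2))
    with (Rabs th * Rabs th * (vnorm W * vnorm W) / 4) by field.
  rewrite <- Rabs_mult, Rabs_right, E by nra; nra.
Qed.

Lemma post_velocity_norm_close v V th : - (PI / 2) <= th <= PI / 2 ->
  Rabs (vnorm (post_velocity v V th) - vnorm V) <= Rabs th * (vnorm V + vnorm v) / 2.
Proof.
  intro Hth; eapply Rle_trans; [apply vnorm_sub_ge |].
  replace (vsub (post_velocity v V th) V) with (Amat th (vsub V v))
    by (unfold post_velocity, vsub, vadd, Amat; simpl; f_equal; field).
  eapply Rle_trans; [apply vnorm_Amat_le, Hth |].
  pose proof (vnorm_sub_le V v); pose proof (Rabs_pos th).
  unfold Rdiv; apply Rmult_le_compat_r; [lra |]; apply Rmult_le_compat_l; lra.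
Qed.

Lemma int_on_unique f a b v w : int_on f a b v -> int_on f a b w -> v = w.
Proof. intros [p1 <-] [p2 <-]; apply RiemannInt_P5. Qed.

Lemma int_on_of_continuous f a b : a <= b ->
  (forall x, a <= x <= b -> continuity_pt f x) -> exists v, int_on f a b v.
Proof. intros Hab Hf; eexists; exists (continuity_implies_RiemannInt Hab Hf); reflexivity. Qed.

Lemma int_on_le f g a b v w : a <= b -> int_on f a b v -> int_on g a b w ->
  (forall x, a < x < b -> f x <= g x) -> v <= w.
Proof. intros Hab [p1 <-] [p2 <-] Hfg; apply RiemannInt_P19; assumption. Qed.

Lemma int_on_chasles f a b c v w : int_on f a b v -> int_on f b c w -> int_on f a c (v + w).
Proof. intros [p1 <-] [p2 <-]; exists (RiemannInt_P24 p1 p2); symmetry; apply RiemannInt_P26. Qed.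

Lemma int_on_lin f g a b v w l : int_on f a b v -> int_on g a b w ->
  int_on (fun x => f x + l * g x) a b (v + l * w).
Proof. intros [p1 <-] [p2 <-]; exists (RiemannInt_P10 l p1 p2); apply RiemannInt_P13. Qed.

Lemma int_on_ext f g a b v : a <= b -> (forall x, a <= x <= b -> f x = g x) ->
  int_on f a b v -> int_on g a b v.
Proof.
  intros Hab Hfg [p <-].
  assert (Hfg' : forall x, Rmin a b <= x <= Rmax a b -> f x = g x)
    by (rewrite Rmin_left, Rmax_right by exact Hab; exact Hfg).
  exists (@Riemann_integrable_ext f g a b Hfg' p); symmetry; apply RiemannInt_P18; [exact Hab |].
  intros x Hx; apply Hfg; lra.
Qed.

Lemma int_on_const c a b : int_on (fun _ => c) a b (c * (b - a)).
Proof. exists (RiemannInt_P14 a b c); apply RiemannInt_P15. Qed.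

Lemma int_on_zero a b : int_on (fun _ => 0) a b 0.
Proof. pose proof (int_on_const 0 a b) as H; rewrite Rmult_0_l in H; exact H. Qed.

Lemma int_on_scal f a b v l : a <= b -> int_on f a b v -> int_on (fun x => l * f x) a b (l * v).
Proof.
  intros Hab Hf; pose proof (int_on_lin _ _ _ _ _ _ l (int_on_const 0 a b) Hf) as H.
  replace (0 * (b - a) + l * v) with (l * v) in H by ring.
  apply (int_on_ext _ _ _ _ _ Hab (fun x _ => Rplus_0_l (l * f x)) H).
Qed.

Lemma int_on_antiderivative f G a b : a <= b ->
  (forall x, a <= x <= b -> continuity_pt f x) ->
  (forall x, a <= x <= b -> derivable_pt_lim G x (f x)) ->
  int_on f a b (G b - G a).
Proof.
  intros Hab Hf HG; exists (continuity_implies_RiemannInt Hab Hf).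
  rewrite (RiemannInt_P20 Hab (FTC_P1 Hab Hf)).
  assert (HGanti : antiderivative f G a b).
  { split; [| exact Hab]; intros x Hx; exists (exist _ (f x) (HG x Hx)).
    symmetry; apply derive_pt_eq_0, HG, Hx. }
  destruct (antiderivative_Ucte _ _ _ _ _ (RiemannInt_P29 Hab Hf) HGanti) as [c Hc].
  rewrite (Hc b), (Hc a) by lra; ring.
Qed.

Lemma derivable_pt_lim_Ropp x : derivable_pt_lim Ropp x (-1).
Proof. change Ropp with (- id)%F; apply derivable_pt_lim_opp, derivable_pt_lim_id. Qed.

Lemma continuity_pt_comp_Ropp F t : continuity_pt F (- t) -> continuity_pt (fun x => F (- x)) t.
Proof.
  intro HF; apply (continuity_pt_comp Ropp F); [| exact HF].
  apply derivable_continuous_pt; exists (-1); apply derivable_pt_lim_Ropp.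
Qed.

Lemma int_on_comp_Ropp F x y v : x <= y ->
  (forall t, - y <= t <= - x -> continuity_pt F t) ->
  int_on F (- y) (- x) v -> int_on (fun t => F (- t)) x y v.
Proof.
  intros Hxy HF Hv; assert (Hxy' : - y <= - x) by lra.
  set (P := primitive Hxy' (FTC_P1 Hxy' HF)).
  assert (HP : forall t, - y <= t <= - x -> derivable_pt_lim P t (F t))
    by (intros t Ht; apply RiemannInt_P28, Ht).
  rewrite (int_on_unique _ _ _ _ _ Hv (int_on_antiderivative F P (- y) (- x) Hxy' HF HP)).
  replace (P (- x) - P (- y)) with ((fun t => - P (- t)) y - (fun t => - P (- t)) x) by ring.
  apply (int_on_antiderivative _ (fun t => - P (- t))); [exact Hxy | |].
  - intros t Ht; apply continuity_pt_comp_Ropp, HF; lra.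
  - intros t Ht; replace (F (- t)) with (- (F (- t) * -1)) by ring.
    apply (derivable_pt_lim_opp (fun t => P (- t))).
    apply (derivable_pt_lim_comp Ropp P), HP; [apply derivable_pt_lim_Ropp | lra].
Qed.

Lemma rpow_continuity_pt t p : 0 < t -> continuity_pt (fun x => rpow x p) t.
Proof.
  intro Ht.
  assert (C : continuity_pt (fun x => Rpower x p) t)
    by (apply derivable_continuous_pt; eexists; apply derivable_pt_lim_power, Ht).
  intros eps Heps; destruct (C eps Heps) as [d [Hd Hx]].
  exists (Rmin d t); split; [apply Rmin_pos; lra |].
  intros x [Dx Hxd]; simpl in *; unfold R_dist in *.
  assert (Hxt : Rabs (x - t) < t) by (eapply Rlt_le_trans; [apply Hxd | apply Rmin_r]).
  apply Rabs_def2 in Hxt.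
  rewrite !rpow_Rpower by lra; apply Hx; split; [exact Dx |].
  eapply Rlt_le_trans; [apply Hxd | apply Rmin_l].
Qed.

Lemma int_on_rpow x y q : 0 < q -> 0 < x <= y ->
  int_on (fun t => rpow t (q - 1)) x y ((rpow y q - rpow x q) / q).
Proof.
  intros Hq Hxy.
  replace ((rpow y q - rpow x q) / q)
    with ((fun t => Rpower t q / q) y - (fun t => Rpower t q / q) x)
    by (rewrite !rpow_Rpower by lra; field; lra).
  apply (int_on_antiderivative _ (fun t => Rpower t q / q)); [lra | intros t Ht; apply rpow_continuity_pt; lra |].
  intros t Ht; rewrite rpow_Rpower by lra.
  replace (Rpower t (q - 1)) with (q * Rpower t (q - 1) / q) by (field; lra).
  apply derivable_pt_lim_scal_right, derivable_pt_lim_power; lra.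
Qed.

Lemma int_on_nonneg f a b v : a <= b -> int_on f a b v -> (forall x, a < x < b -> 0 <= f x) -> 0 <= v.
Proof.
  intros Hab Hv Hf.
  pose proof (int_on_le _ _ a b _ _ Hab (int_on_zero a b) Hv Hf); lra.
Qed.

Lemma int_on_rpow_le g M q e c w : 0 < q -> 0 <= M -> 0 < e <= c -> int_on g e c w ->
  (forall t, e < t < c -> g t <= M * rpow t (q - 1)) -> w <= M * (rpow c q / q).
Proof.
  intros Hq HM Hec Hw Hg.
  pose proof (int_on_le _ _ e c _ _ ltac:(lra) Hw
                (int_on_scal _ e c _ M ltac:(lra) (int_on_rpow e c q Hq Hec)) Hg).
  pose proof (rpow_gt_0 e q ltac:(lra)).
  assert (M * ((rpow c q - rpow e q) / q) <= M * (rpow c q / q)).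
  { apply Rmult_le_compat_l; [exact HM |]; unfold Rdiv.
    apply Rmult_le_compat_r; [left; apply Rinv_0_lt_compat, Hq | lra]. }
  lra.
Qed.

Lemma monotone_family_limit (c B : R) (P : R -> R -> Prop) : 0 < c ->
  (forall e, 0 < e < c -> exists y, P e y) ->
  (forall e1 e2 y1 y2, 0 < e1 <= e2 -> e2 < c -> P e1 y1 -> P e2 y2 -> y2 <= y1) ->
  (forall e y, 0 < e < c -> P e y -> y <= B) ->
  exists L, forall eps, 0 < eps -> exists delta, 0 < delta /\
    forall e y, 0 < e < delta -> e < c -> P e y -> Rabs (y - L) < eps.
Proof.
  intros Hc Hex Hmono HB.
  set (E := fun y => exists e, 0 < e < c /\ P e y).
  assert (Hbound : bound E) by (exists B; intros y [e [He Hy]]; eapply HB; eauto).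
  assert (Hne : exists y, E y).
  { destruct (Hex (c / 2) ltac:(lra)) as [y Hy]; exists y, (c / 2); split; [lra | exact Hy]. }
  destruct (completeness E Hbound Hne) as [L [HLub HLleast]].
  exists L; intros eps Heps.
  assert (Hnear : exists y0 e0, 0 < e0 < c /\ P e0 y0 /\ L - eps < y0).
  { apply NNPP; intro N.
    assert (is_upper_bound E (L - eps)).
    { intros y [e [He Hy]]; apply Rnot_lt_le; intro Hlt; apply N; exists y, e; auto. }
    specialize (HLleast _ H); lra. }
  destruct Hnear as [y0 [e0 [He0 [Py0 Hy0]]]].
  exists e0; split; [lra |]; intros e y He Hec Py.
  pose proof (Hmono e e0 y y0 ltac:(lra) ltac:(lra) Py Py0).
  assert (y <= L) by (apply HLub; exists e; split; [lra | exact Py]).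
  apply Rabs_def1; lra.
Qed.

Definition int_on_tail_lim (g : R -> R) (c L : R) : Prop :=
  forall eps, 0 < eps -> exists delta, 0 < delta /\
    forall e v, 0 < e < delta -> e < c -> int_on g e c v -> Rabs (v - L) < eps.

Lemma int_on_tail_lim_nonneg h M q c : 0 < q -> 0 < c -> 0 <= M ->
  (forall t, 0 < t <= c -> continuity_pt h t) ->
  (forall t, 0 < t <= c -> 0 <= h t <= M * rpow t (q - 1)) ->
  exists L, int_on_tail_lim h c L.
Proof.
  intros Hq Hc HM Hh Hbound.
  apply (monotone_family_limit c (M * (rpow c q / q)) (fun e y => int_on h e c y) Hc).
  - intros e He; apply int_on_of_continuous; [lra |]; intros; apply Hh; lra.
  - intros e1 e2 y1 y2 He He2 P1 P2.
    destruct (int_on_of_continuous h e1 e2 ltac:(lra)) as [z Hz]; [intros; apply Hh; lra |].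
    rewrite (int_on_unique _ _ _ _ _ P1 (int_on_chasles _ _ _ _ _ _ Hz P2)).
    assert (0 <= z) by (apply (int_on_nonneg h e1 e2 z); [lra | exact Hz | intros; apply Hbound; lra]).
    lra.
  - intros e y He Py; apply (int_on_rpow_le h M q e c); [exact Hq | exact HM | lra | exact Py |].
    intros t Ht; apply Hbound; lra.
Qed.

Lemma rpow_lt_of_small q eps : 0 < q -> 0 < eps ->
  exists delta, 0 < delta /\ forall e, 0 <= e < delta -> rpow e q < eps.
Proof.
  intros Hq Heps; exists (rpow eps (/ q)); split; [apply rpow_gt_0, Heps |].
  intros e He; rewrite <- (rpow_inv_exponent eps q) by lra.
  apply rpow_lt_base; [exact He | exact Hq].
Qed.

Lemma int_on_tail_lim_dominated g M q c : 0 < q -> 0 < c ->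
  (forall t, 0 < t <= c -> continuity_pt g t) ->
  (forall t, 0 < t <= c -> Rabs (g t) <= M * rpow t (q - 1)) ->
  exists L, int_on_tail_lim g c L.
Proof.
  intros Hq Hc Hg Hdom.
  assert (HM : 0 <= M).
  { pose proof (Hdom c ltac:(lra)); pose proof (rpow_gt_0 c (q - 1) Hc).
    pose proof (Rabs_pos (g c)); nra. }
  (* shifting [g] by its dominating function makes it nonnegative *)
  set (h := fun t => g t + M * rpow t (q - 1)).
  assert (Hh : forall t, 0 < t <= c -> continuity_pt h t).
  { intros t Ht; apply continuity_pt_plus; [apply Hg, Ht |].
    apply continuity_pt_scal, rpow_continuity_pt; lra. }
  destruct (int_on_tail_lim_nonneg h (2 * M) q c Hq Hc ltac:(lra) Hh) as [L0 HL0].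
  { intros t Ht; pose proof (Rabs_le_inv _ _ (Hdom t Ht)); unfold h; lra. }
  exists (L0 - M * (rpow c q / q)); intros eps Heps.
  destruct (HL0 (eps / 2) ltac:(lra)) as [d1 [Hd1 H1]].
  destruct (rpow_lt_of_small q (eps / 2 * q / (M + 1)) Hq) as [d2 [Hd2 H2]].
  { apply Rdiv_lt_0_compat; nra. }
  exists (Rmin d1 d2); split; [apply Rmin_pos; assumption |].
  intros e v He Hec Hv; pose proof (Rmin_l d1 d2); pose proof (Rmin_r d1 d2).
  destruct (int_on_of_continuous h e c ltac:(lra)) as [y Hy]; [intros; apply Hh; lra |].
  specialize (H1 e y ltac:(lra) Hec Hy); specialize (H2 e ltac:(lra)).
  assert (Ey : y = v + M * ((rpow c q - rpow e q) / q)).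
  { apply (int_on_unique _ _ _ _ _ Hy).
    pose proof (int_on_lin _ _ _ _ _ _ 1 Hv
                  (int_on_scal _ e c _ M ltac:(lra) (int_on_rpow e c q Hq ltac:(lra)))) as Hsum.
    rewrite Rmult_1_l in Hsum; eapply int_on_ext; [lra | | exact Hsum].
    intros; unfold h; ring. }
  pose proof (rpow_gt_0 e q ltac:(lra)).
  assert (Hsmall : 0 <= M * (rpow e q / q) < eps / 2).
  { split; [apply Rmult_le_pos; [exact HM | left; apply Rdiv_lt_0_compat; assumption] |].
    assert (Hx : rpow e q / q < eps / 2 * q / (M + 1) / q)
      by (unfold Rdiv at 1 3; apply Rmult_lt_compat_r; [apply Rinv_0_lt_compat, Hq | exact H2]).
    assert (0 <= rpow e q / q) by (left; apply Rdiv_lt_0_compat; assumption).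
    replace (eps / 2) with ((M + 1) * (eps / 2 * q / (M + 1) / q)) by (field; lra).
    apply Rle_lt_trans with ((M + 1) * (rpow e q / q)); [nra |].
    apply Rmult_lt_compat_l; [lra | exact Hx]. }
  replace (v - (L0 - M * (rpow c q / q))) with ((y - L0) + M * (rpow e q / q))
    by (rewrite Ey; field; lra).
  eapply Rle_lt_trans; [apply Rabs_triang |]; rewrite (Rabs_right (M * _)) by lra; lra.
Qed.

Lemma improper_int_sym_exists F M q : 0 < q ->
  (forall th, 0 < Rabs th <= PI / 2 -> continuity_pt F th) ->
  (forall th, 0 < Rabs th <= PI / 2 -> Rabs (F th) <= M * rpow (Rabs th) (q - 1)) ->
  exists I, improper_int_sym F I.
Proof.
  intros Hq HF Hdom; pose proof PI2_RGT_0 as Hpi.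
  assert (HFr : forall t, 0 < t <= PI / 2 -> continuity_pt F t)
    by (intros t Ht; apply HF; rewrite Rabs_right; lra).
  assert (HFl : forall t, - (PI / 2) <= t < 0 -> continuity_pt F t)
    by (intros t Ht; apply HF; rewrite Rabs_left; lra).
  destruct (int_on_tail_lim_dominated F M q (PI / 2) Hq Hpi HFr) as [Lr HLr].
  { intros t Ht; pose proof (Hdom t); rewrite Rabs_right in * by lra; auto with real. }
  destruct (int_on_tail_lim_dominated (fun t => F (- t)) M q (PI / 2) Hq Hpi) as [Ll HLl].
  { intros t Ht; apply continuity_pt_comp_Ropp, HFl; lra. }
  { intros t Ht; pose proof (Hdom (- t)); rewrite Rabs_Ropp, Rabs_right in * by lra; auto with real. }
  set (Lf := fun e => epsilon (inhabits 0) (fun v => int_on F (- (PI / 2)) (- e) v)).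
  set (Rf := fun e => epsilon (inhabits 0) (fun v => int_on F e (PI / 2) v)).
  assert (HLf : forall e, 0 < e < PI / 2 -> int_on F (- (PI / 2)) (- e) (Lf e))
    by (intros e He; apply epsilon_spec, int_on_of_continuous; [lra | intros; apply HFl; lra]).
  assert (HRf : forall e, 0 < e < PI / 2 -> int_on F e (PI / 2) (Rf e))
    by (intros e He; apply epsilon_spec, int_on_of_continuous; [lra | intros; apply HFr; lra]).
  exists (Ll + Lr), Lf, Rf; split; [intros e He; split; auto |].
  intros eps Heps.
  destruct (HLr (eps / 2) ltac:(lra)) as [d1 [Hd1 H1]].
  destruct (HLl (eps / 2) ltac:(lra)) as [d2 [Hd2 H2]].
  exists (Rmin d1 d2); split; [apply Rmin_pos; assumption |]; intros e He Hec.
  pose proof (Rmin_l d1 d2); pose proof (Rmin_r d1 d2).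
  assert (Hl : int_on (fun t => F (- t)) e (PI / 2) (Lf e))
    by (apply int_on_comp_Ropp; [lra | intros; apply HFl; lra | apply HLf; lra]).
  specialize (H1 e (Rf e) ltac:(lra) Hec (HRf e ltac:(lra))).
  specialize (H2 e (Lf e) ltac:(lra) Hec Hl).
  replace (Lf e + Rf e - (Ll + Lr)) with ((Lf e - Ll) + (Rf e - Lr)) by ring.
  eapply Rle_lt_trans; [apply Rabs_triang | lra].
Qed.

Lemma improper_int_sym_le F I B e0 : improper_int_sym F I -> 0 < e0 ->
  (forall e v1 v2, 0 < e < e0 -> e < PI / 2 ->
     int_on F (- (PI / 2)) (- e) v1 -> int_on F e (PI / 2) v2 -> v1 + v2 <= B) ->
  I <= B.
Proof.
  intros [Lf [Rf [HLR Hlim]]] He0 HB; pose proof PI2_RGT_0.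
  apply Rnot_lt_le; intro HBI.
  destruct (Hlim (I - B) ltac:(lra)) as [d [Hd Hdd]].
  set (e := Rmin (Rmin d e0) (PI / 2) / 2).
  pose proof (Rmin_l (Rmin d e0) (PI / 2)); pose proof (Rmin_r (Rmin d e0) (PI / 2)).
  pose proof (Rmin_l d e0); pose proof (Rmin_r d e0).
  pose proof (Rmin_pos (Rmin d e0) (PI / 2) (Rmin_pos d e0 Hd He0) ltac:(lra)).
  assert (He : 0 < e /\ e < d /\ e < e0 /\ e < PI / 2) by (unfold e; lra).
  destruct (HLR e ltac:(lra)) as [I1 I2].
  pose proof (HB e _ _ ltac:(lra) ltac:(lra) I1 I2).
  pose proof (Rabs_def2 _ _ (Hdd e ltac:(lra) ltac:(lra))); lra.
Qed.

(* The pointwise information [P |th| (F th)] is symmetric in [th], so a single bound on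
   integrals over [[e, pi/2]] controls both halves of the symmetric integral. *)
Lemma improper_int_sym_le_of_halves F M q B (P : R -> R -> Prop) : 0 < q ->
  (forall th, 0 < Rabs th <= PI / 2 -> continuity_pt F th) ->
  (forall th, 0 < Rabs th <= PI / 2 -> Rabs (F th) <= M * rpow (Rabs th) (q - 1)) ->
  (forall th, 0 < Rabs th <= PI / 2 -> P (Rabs th) (F th)) ->
  (forall g e w, (forall t, 0 < t <= PI / 2 -> continuity_pt g t) ->
     (forall t, 0 < t <= PI / 2 -> P t (g t)) ->
     0 < e < PI / 4 -> int_on g e (PI / 2) w -> w <= B) ->
  exists I, improper_int_sym F I /\ I <= 2 * B.
Proof.
  intros Hq HF Hdom HP Hhalf; pose proof PI4_RLT_PI2.
  destruct (improper_int_sym_exists F M q Hq HF Hdom) as [I HI].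
  exists I; split; [exact HI |].
  apply (improper_int_sym_le F I _ (PI / 4) HI PI4_RGT_0); intros e v1 v2 He He2 I1 I2.
  assert (HFl : forall t, - (PI / 2) <= t <= - e -> continuity_pt F t)
    by (intros t Ht; apply HF; rewrite Rabs_left; lra).
  pose proof (int_on_comp_Ropp F e (PI / 2) v1 ltac:(lra) HFl I1) as I1'.
  assert (v1 <= B).
  { apply (Hhalf (fun t => F (- t)) e); [| | lra | exact I1'].
    - intros t Ht; apply continuity_pt_comp_Ropp, HF; rewrite Rabs_left; lra.
    - intros t Ht; rewrite <- (Rabs_right t) at 1 by lra; rewrite <- Rabs_Ropp.
      apply HP; rewrite Rabs_Ropp, Rabs_right; lra. }
  assert (v2 <= B).
  { apply (Hhalf F e); [| | lra | exact I2].
    - intros t Ht; apply HF; rewrite Rabs_right; lra.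
    - intros t Ht; rewrite <- (Rabs_right t) at 1 by lra; apply HP; rewrite Rabs_right; lra. }
  lra.
Qed.

Lemma improper_int_sym_le_dominated F M q : 0 < q -> 0 <= M ->
  (forall th, 0 < Rabs th <= PI / 2 -> continuity_pt F th) ->
  (forall th, 0 < Rabs th <= PI / 2 -> Rabs (F th) <= M * rpow (Rabs th) (q - 1)) ->
  exists I, improper_int_sym F I /\ I <= 2 * (M * (rpow (PI / 2) q / q)).
Proof.
  intros Hq HM HF Hdom.
  apply (improper_int_sym_le_of_halves F M q _ (fun t y => y <= M * rpow t (q - 1)) Hq HF Hdom).
  - intros th Hth; exact (Rle_trans _ _ _ (Rle_abs _) (Hdom th Hth)).
  - intros g e w _ Hg He Hw; pose proof PI4_RLT_PI2.
    apply (int_on_rpow_le g M q e (PI / 2)); [exact Hq | exact HM | lra | exact Hw |].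
    intros t Ht; apply Hg; lra.
Qed.

Lemma int_on_split_le h e T K D nu w : 0 < nu < 1 -> 0 < e < PI / 4 -> 0 <= T < PI / 4 ->
  0 <= K -> 0 <= D ->
  (forall t, 0 < t <= PI / 2 -> continuity_pt h t) ->
  (forall t, 0 < t <= PI / 2 ->
     h t <= K * rpow t (- nu) /\ (T <= t -> h t <= 0) /\ (PI / 4 <= t -> h t <= - D)) ->
  int_on h e (PI / 2) w -> w <= K * (rpow T (1 - nu) / (1 - nu)) - D * (PI / 4).
Proof.
  intros Hnu He HT HK HD Hh Hbound Hw; pose proof PI2_3_2.
  pose proof (Rmax_l e T); pose proof (Rmax_r e T); set (m := Rmax e T) in *.
  assert (m < PI / 4) by (apply Rmax_lub_lt; lra).
  destruct (int_on_of_continuous h e m ltac:(lra)) as [w1 I1]; [intros; apply Hh; lra |].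
  destruct (int_on_of_continuous h m (PI / 4) ltac:(lra)) as [w2 I2]; [intros; apply Hh; lra |].
  destruct (int_on_of_continuous h (PI / 4) (PI / 2) ltac:(lra)) as [w3 I3]; [intros; apply Hh; lra |].
  rewrite (int_on_unique _ _ _ _ _ Hw
             (int_on_chasles _ _ _ _ _ _ (int_on_chasles _ _ _ _ _ _ I1 I2) I3)).
  (* on [[e, m]] the singular bound, beyond [T] nonpositivity, beyond [pi/4] the drift [- D] *)
  assert (B1 : w1 <= K * (rpow T (1 - nu) / (1 - nu))).
  { assert (w1 <= K * (rpow m (1 - nu) / (1 - nu))).
    { apply (int_on_rpow_le h K (1 - nu) e m); [lra | exact HK | lra | exact I1 |].
      intros t Ht; replace (1 - nu - 1) with (- nu) by ring; apply Hbound; lra. }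
    destruct (Rle_dec T e) as [HTe | HeT].
    - assert (w1 <= 0) by (apply (int_on_le h (fun _ => 0) e m _ _ ltac:(lra) I1 (int_on_zero e m));
                             intros t Ht; apply Hbound; lra).
      pose proof (rpow_ge_0 T (1 - nu)).
      assert (0 <= K * (rpow T (1 - nu) / (1 - nu)))
        by (apply Rmult_le_pos; [| apply Rmult_le_pos; [| left; apply Rinv_0_lt_compat]]; lra).
      lra.
    - unfold m in *; rewrite Rmax_right in * by lra; assumption. }
  assert (B2 : w2 <= 0).
  { apply (int_on_le h (fun _ => 0) m (PI / 4) _ _ ltac:(lra) I2 (int_on_zero _ _)).
    intros t Ht; apply Hbound; lra. }
  assert (B3 : w3 <= - D * (PI / 4)).
  { replace (- D * (PI / 4)) with (- D * (PI / 2 - PI / 4)) by field.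
    apply (int_on_le h (fun _ => - D) (PI / 4) (PI / 2) _ _ ltac:(lra) I3 (int_on_const (- D) _ _)).
    intros t Ht; apply Hbound; lra. }
  lra.
Qed.

Lemma rpow_comp_continuity_pt phi k x : 0 < k -> (forall t, 0 <= phi t) ->
  continuity_pt phi x -> continuity_pt (fun t => rpow (phi t) k) x.
Proof.
  intros Hk Hphi Hc; destruct (Req_dec (phi x) 0) as [E | E].
  - intros eps Heps; set (eta := rpow eps (/ k)).
    assert (Heta : 0 < eta) by (apply rpow_gt_0; lra).
    destruct (Hc eta Heta) as [d [Hd Hx]]; exists d; split; [exact Hd |].
    intros t Ht; specialize (Hx t Ht); simpl in *; unfold R_dist in *.
    rewrite E, rpow_0_l, Rminus_0_r, Rabs_right by apply Rle_ge, rpow_ge_0.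
    rewrite E, Rminus_0_r, Rabs_right in Hx by (apply Rle_ge, Hphi).
    rewrite <- (rpow_inv_exponent eps k) by lra; fold eta.
    apply rpow_lt_base; [split; [apply Hphi | exact Hx] | exact Hk].
  - apply (continuity_pt_comp phi (fun y => rpow y k)); [exact Hc |].
    apply rpow_continuity_pt; specialize (Hphi x); lra.
Qed.

Lemma post_velocity_norm_continuity_pt v V th :
  continuity_pt (fun t => vnorm (post_velocity v V t)) th.
Proof.
  destruct v as [v1 v2], V as [V1 V2]; unfold vnorm, post_velocity, vadd, vsub, Amat; simpl.
  apply (continuity_pt_comp _ sqrt); [reg |].
  apply continuity_pt_sqrt, Rplus_le_le_0_compat; apply Rle_0_sqr.
Qed.

Lemma expdiff_continuity_pt k v V th : 0 < k -> continuity_pt (expdiff k v V) th.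
Proof.
  intro Hk; unfold expdiff.
  apply (continuity_pt_minus (fun t => exp (rpow (vnorm (post_velocity v V t)) k)) (fun _ => _)).
  - apply (continuity_pt_comp (fun t => rpow (vnorm (post_velocity v V t)) k) exp).
    + apply rpow_comp_continuity_pt; [exact Hk | intro; apply vnorm_ge_0 |].
      apply post_velocity_norm_continuity_pt.
    + apply derivable_continuous_pt, derivable_pt_exp.
  - apply continuity_pt_const; intros u w; reflexivity.
Qed.

Lemma Rabs_expdiff_le k v V th : 0 < k < 1 -> - (PI / 2) <= th <= PI / 2 ->
  Rabs (expdiff k v V th)
  <= exp (2 * rpow (vnorm V) k + 2 * rpow (vnorm v) k) * rpow (Rabs th) k.
Proof.
  intros Hk Hth; unfold expdiff; fold (post_velocity v V th).
  pose proof (vnorm_ge_0 V); pose proof (vnorm_ge_0 v); pose proof (vnorm_ge_0 (post_velocity v V th)).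
  pose proof (post_velocity_norm_le v V th); pose proof (Rabs_pos th).
  pose proof (post_velocity_norm_close v V th Hth).
  set (a := vnorm V) in *; set (r := vnorm v) in *; set (n := vnorm (post_velocity v V th)) in *.
  set (z := rpow a k + rpow r k).
  assert (Hz : rpow (a + r) k <= z) by (apply rpow_subadditive; lra).
  pose proof (rpow_le_base n (a + r) k ltac:(lra) ltac:(lra)).
  pose proof (rpow_le_base a (a + r) k ltac:(lra) ltac:(lra)).
  assert (Hd : Rabs (rpow n k - rpow a k) <= rpow (Rabs th) k * z).
  { eapply Rle_trans; [apply rpow_sub_abs_le; lra |].
    eapply Rle_trans; [apply (rpow_le_base _ (Rabs th * (a + r))); [split; [apply Rabs_pos | nra] | lra] |].
    rewrite rpow_mult_distr by lra; apply Rmult_le_compat_l; [apply rpow_ge_0 | exact Hz]. }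
  eapply Rle_trans; [apply (exp_sub_le_abs _ _ z); lra |].
  replace (2 * rpow a k + 2 * rpow r k) with (z + z) by (unfold z; ring); rewrite exp_plus.
  pose proof (exp_ineq1_le z); pose proof (exp_pos z); pose proof (rpow_ge_0 (Rabs th) k).
  pose proof (rpow_ge_0 a k); pose proof (rpow_ge_0 r k); pose proof (Rabs_pos (rpow n k - rpow a k)).
  assert (rpow (Rabs th) k * z <= rpow (Rabs th) k * exp z) by (apply Rmult_le_compat_l; lra).
  nra.
Qed.

Lemma expdiff_eq k v V th : expdiff k v V th =
  exp (rpow (vnorm V) k) * (exp (rpow (vnorm (post_velocity v V th)) k - rpow (vnorm V) k) - 1).
Proof.
  unfold expdiff; fold (post_velocity v V th).
  rewrite Rmult_minus_distr_l, <- exp_plus; f_equal; [f_equal; ring | ring].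
Qed.

Section FarRegime.

Variables (k : R) (v V : vec2) (th : R).
Hypothesis Hk : 0 < k < 1.
Hypothesis HV : 1 <= vnorm V.
Hypothesis Hfar : 64 * vnorm v <= vnorm V.
Hypothesis Hth : 0 < Rabs th <= PI / 2.

Lemma post_velocity_norm_sq_sub_le :
  vnorm (post_velocity v V th) * vnorm (post_velocity v V th) - vnorm V * vnorm V
  <= - vnorm V * vnorm V * (Rabs th * Rabs th) / 20 + Rabs th * vnorm V * vnorm v.
Proof.
  rewrite post_velocity_norm_sq.
  pose proof (Rabs_cross_le v V); pose proof (Rabs_sin_le th).
  pose proof (cos_le_quadratic th ltac:(apply Rabs_le_inv; lra)).
  pose proof (vnorm_ge_0 v); pose proof (vnorm_ge_0 V).
  set (a := vnorm V) in *; set (r := vnorm v) in *; set (X := cross v V) in *.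
  rewrite <- Rabs_mult, (Rabs_right (th * th)) by nra.
  assert (sin th * X <= Rabs th * a * r).
  { pose proof (Rle_abs (sin th * X)); rewrite Rabs_mult in *.
    assert (Rabs (sin th) * Rabs X <= Rabs th * (a * r))
      by (apply Rmult_le_compat; try apply Rabs_pos; assumption).
    lra. }
  assert (a * a - r * r >= a * a / 2) by nra.
  assert (0 <= (1 - cos th - th * th / 5) * (a * a - r * r)) by (apply Rmult_le_pos; nra).
  assert (0 <= th * th / 5 * (a * a - r * r - a * a / 2)) by (apply Rmult_le_pos; nra).
  nra.
Qed.

Lemma rpow_post_velocity_sub_le :
  rpow (vnorm (post_velocity v V th)) k - rpow (vnorm V) k
  <= k * rpow (vnorm V) (k - 1) * (- vnorm V * (Rabs th * Rabs th) / 40 + Rabs th * vnorm v / 2).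
Proof.
  pose proof post_velocity_norm_sq_sub_le as Hsq.
  pose proof (vnorm_ge_0 (post_velocity v V th)) as Hn.
  pose proof (rpow_concave_tangent (vnorm (post_velocity v V th)) (vnorm V) k Hn ltac:(lra) Hk).
  set (a := vnorm V) in *; set (r := vnorm v) in *; set (n := vnorm (post_velocity v V th)) in *.
  (* [n - a <= (n^2 - a^2) / (2a)], since [(n - a)^2 >= 0] *)
  assert (n - a <= - a * (Rabs th * Rabs th) / 40 + Rabs th * r / 2).
  { apply Rmult_le_reg_r with (2 * a); [lra |].
    replace ((- a * (Rabs th * Rabs th) / 40 + Rabs th * r / 2) * (2 * a))
      with (- a * a * (Rabs th * Rabs th) / 20 + Rabs th * a * r) by field.
    pose proof (Rle_0_sqr (n - a)); unfold Rsqr in *; nra. }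
  assert (0 <= k * rpow a (k - 1)) by (pose proof (rpow_ge_0 a (k - 1)); nra).
  assert (k * rpow a (k - 1) * (n - a)
          <= k * rpow a (k - 1) * (- a * (Rabs th * Rabs th) / 40 + Rabs th * r / 2))
    by (apply Rmult_le_compat_l; assumption).
  lra.
Qed.

Lemma expdiff_far_nonpos : 40 * vnorm v <= vnorm V * Rabs th -> expdiff k v V th <= 0.
Proof.
  intro Hwide; rewrite expdiff_eq.
  pose proof rpow_post_velocity_sub_le as Hsub.
  pose proof (rpow_ge_0 (vnorm V) (k - 1)); pose proof (Rabs_pos th).
  assert (Hneg : - vnorm V * (Rabs th * Rabs th) / 40 + Rabs th * vnorm v / 2 <= 0) by nra.
  assert (Hle0 : k * rpow (vnorm V) (k - 1)
                 * (- vnorm V * (Rabs th * Rabs th) / 40 + Rabs th * vnorm v / 2) <= 0)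
    by (assert (0 <= k * rpow (vnorm V) (k - 1)) by (apply Rmult_le_pos; lra); nra).
  pose proof (exp_le_mono _ 0 (Rle_trans _ _ _ Hsub Hle0)); rewrite exp_0 in *.
  pose proof (exp_pos (rpow (vnorm V) k)); nra.
Qed.

Lemma expdiff_far_wide : PI / 4 <= Rabs th ->
  expdiff k v V th <= exp (rpow (vnorm V) k) * (exp (- (k / 150)) - 1).
Proof.
  intro Hwide; rewrite expdiff_eq.
  apply Rmult_le_compat_l; [left; apply exp_pos |]; apply Rplus_le_compat_r, exp_le_mono.
  eapply Rle_trans; [apply rpow_post_velocity_sub_le |].
  pose proof PI2_3_2; pose proof (vnorm_ge_0 v).
  set (a := vnorm V) in *; set (r := vnorm v) in *; set (t := Rabs th) in *.
  assert (Hak : rpow a (k - 1) * a = rpow a k) by (rewrite rpow_mul_self by lra; f_equal; ring).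
  assert (Hak1 : 1 <= rpow a k) by (rewrite <- (rpow_1_l k); apply rpow_le_base; lra).
  pose proof (rpow_ge_0 a (k - 1)).
  (* the gain [t r / 2] is at most half of the loss [a t^2 / 40], and [t^2 >= 9/16] *)
  assert (40 * r <= a * t) by nra.
  assert (- a * (t * t) / 40 + t * r / 2 <= - a * (t * t) / 80) by nra.
  assert (k * rpow a (k - 1) * (- a * (t * t) / 40 + t * r / 2)
          <= - (k * (rpow a (k - 1) * a) * (t * t) / 80)).
  { replace (- (k * (rpow a (k - 1) * a) * (t * t) / 80))
      with (k * rpow a (k - 1) * (- a * (t * t) / 80)) by field.
    apply Rmult_le_compat_l; [apply Rmult_le_pos |]; lra. }
  rewrite Hak in *.
  assert (k * rpow a k * (t * t) >= k * 1 * (9 / 16)) by (apply Rmult_ge_compat; nra).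
  lra.
Qed.

Lemma expdiff_far_le :
  expdiff k v V th
  <= exp (rpow (vnorm V) k) * (rpow (vnorm V) (k - 1) * vnorm v * exp (rpow (vnorm v) k)) * Rabs th.
Proof.
  rewrite expdiff_eq, Rmult_assoc; apply Rmult_le_compat_l; [left; apply exp_pos |].
  pose proof rpow_post_velocity_sub_le as Hsub.
  pose proof (post_velocity_norm_le v V th) as Hn; pose proof (vnorm_ge_0 v); pose proof (Rabs_pos th).
  pose proof (rpow_le_base _ _ k (conj (vnorm_ge_0 _) Hn) ltac:(lra)).
  pose proof (rpow_subadditive (vnorm V) (vnorm v) k ltac:(lra) ltac:(lra) ltac:(lra)).
  pose proof (rpow_ge_0 (vnorm V) (k - 1)).
  set (F := rpow (vnorm (post_velocity v V th)) k - rpow (vnorm V) k) in *.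
  set (a := vnorm V) in *; set (r := vnorm v) in *; set (t := Rabs th) in *.
  set (G := rpow a (k - 1) * r * t).
  assert (HG : 0 <= G) by (unfold G; repeat apply Rmult_le_pos; lra).
  assert (HFG : F <= G).
  { eapply Rle_trans; [exact Hsub |].
    assert (- a * (t * t) / 40 + t * r / 2 <= t * r) by nra.
    assert (k * rpow a (k - 1) * (- a * (t * t) / 40 + t * r / 2) <= k * rpow a (k - 1) * (t * r))
      by (apply Rmult_le_compat_l; nra).
    assert (0 <= rpow a (k - 1) * (t * r)) by (apply Rmult_le_pos; nra).
    unfold G; nra. }
  assert (HFr : F <= rpow r k) by (unfold F; lra).
  replace (rpow a (k - 1) * r * exp (rpow r k) * t) with (G * exp (rpow r k)) by (unfold G; ring).
  pose proof (exp_pos (rpow r k)).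
  destruct (Rle_dec F 0) as [HF0 | HF0].
  - pose proof (exp_le_mono _ _ HF0); rewrite exp_0 in *; nra.
  - pose proof (exp_sub_1_le F ltac:(lra)); pose proof (exp_le_mono _ _ HFr); pose proof (exp_pos F).
    nra.
Qed.

End FarRegime.

Lemma assumption_A_kernel_bounds nu b : assumption_A nu b ->
  (forall th, 0 < Rabs th <= PI / 2 -> continuity_pt b th) /\
  exists cb Cb, 0 < cb /\ 0 < Cb /\
    forall th, 0 < Rabs th <= PI / 2 ->
      cb * rpow (Rabs th) (-1 - nu) <= b th <= Cb * rpow (Rabs th) (-1 - nu).
Proof.
  intros [Heven [[c [C [Hc Hbounds]]] [d [Hd0 [Hderiv _]]]]]; split.
  - intros th Hth; replace b with (d O) by (apply functional_extensionality; exact Hd0).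
    apply derivable_continuous_pt; exists (d 1%nat th); apply Hderiv, Hth.
  - exists c, C; split; [lra |]; split; [lra |]; intros th Hth.
    destruct (Rle_dec 0 th).
    + rewrite Rabs_right in * by lra; apply Hbounds; lra.
    + rewrite <- Heven by exact Hth; rewrite Rabs_left in * by lra; apply Hbounds; lra.
Qed.

Lemma rpow_opp_ge_quarter t p : 0 < t <= 2 -> 0 <= p <= 2 -> / 4 <= rpow t (- p).
Proof.
  intros Ht Hp; rewrite rpow_Rpower by lra; rewrite Rpower_Ropp.
  apply Rinv_le_contravar; [apply exp_pos |].
  assert (Rpower t p <= Rpower 2 p).
  { destruct (Req_dec p 0) as [-> | Hp0]; [rewrite !Rpower_O; lra |].
    apply Rle_Rpower_l; lra. }
  assert (Rpower 2 p <= Rpower 2 2) by (apply Rle_Rpower; lra).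
  replace (Rpower 2 2) with 4 in *
    by (replace 2 with (INR 2) at 2 by (simpl; ring); rewrite Rpower_pow by lra; simpl; ring).
  lra.
Qed.

Lemma rpow_far_width_le k nu a r : 0 < nu < 1 -> 1 <= a -> 0 <= r ->
  rpow a (k - 1) * r * rpow (40 * r / a) (1 - nu) <= 40 * rpow a (k + nu - 2) * rpow r (2 - nu).
Proof.
  intros Hnu Ha Hr; destruct (Req_dec r 0) as [-> | Hr0].
  { rewrite !Rmult_0_r, Rmult_0_l, rpow_0_l; lra. }
  unfold Rdiv; rewrite !rpow_mult_distr, rpow_Rinv
    by (try apply Rmult_le_pos; try left; try apply Rinv_0_lt_compat; lra).
  assert (E1 : rpow a (k - 1) * rpow a (- (1 - nu)) = rpow a (k + nu - 2))
    by (rewrite <- rpow_plus by lra; f_equal; ring).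
  assert (E2 : r * rpow r (1 - nu) = rpow r (2 - nu))
    by (rewrite Rmult_comm, rpow_mul_self by lra; f_equal; ring).
  assert (L40 : rpow 40 (1 - nu) <= 40)
    by (rewrite <- (rpow_1_r 40) at 2 by lra; apply rpow_le_exponent; lra).
  replace (rpow a (k - 1) * r * (rpow 40 (1 - nu) * rpow r (1 - nu) * rpow a (- (1 - nu))))
    with (rpow 40 (1 - nu) * ((rpow a (k - 1) * rpow a (- (1 - nu))) * (r * rpow r (1 - nu))))
    by ring.
  rewrite E1, E2.
  pose proof (Rmult_le_pos _ _ (rpow_ge_0 a (k + nu - 2)) (rpow_ge_0 r (2 - nu))).
  nra.
Qed.

Lemma rpow_near_le k a r : 0 < k < 1 -> 0 <= a -> 0 <= r -> ~ (1 <= a /\ 64 * r <= a) ->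
  rpow a k <= 1 + 64 * rpow r k.
Proof.
  intros Hk Ha Hr Hnear; pose proof (rpow_ge_0 r k).
  destruct (Rlt_dec a 1) as [Ha1 | Ha1].
  - pose proof (rpow_le_base a 1 k ltac:(lra) ltac:(lra)); rewrite rpow_1_l in *; lra.
  - assert (a < 64 * r) by (apply Rnot_le_lt; intro; apply Hnear; split; lra).
    pose proof (rpow_le_base a (64 * r) k ltac:(lra) ltac:(lra)).
    rewrite rpow_mult_distr in * by lra.
    assert (rpow 64 k <= 64) by (rewrite <- (rpow_1_r 64) at 2 by lra; apply rpow_le_exponent; lra).
    nra.
Qed.

Lemma rpow_Rmax_weight_ge k nu a : 0 < k < 1 -> 0 < nu < 1 -> 0 <= a ->
  1 <= rpow_exp_sup 2 k * exp 1 * exp (rpow a k) * rpow (Rmax a 1) (k + nu - 2).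
Proof.
  intros Hk Hnu Ha; set (m := Rmax a 1); pose proof (Rmax_r a 1) as Hm1; fold m in Hm1.
  assert (Hweight : 1 <= rpow m (k + nu - 2) * rpow m 2).
  { rewrite <- rpow_plus, <- (rpow_0_r m) by lra; apply rpow_le_exponent; lra. }
  assert (Hmk : rpow m k <= 1 + rpow a k).
  { unfold m, Rmax; destruct (Rle_dec a 1); [rewrite rpow_1_l | ]; pose proof (rpow_ge_0 a k); lra. }
  pose proof (rpow_le_rpow_exp_sup 2 k m ltac:(lra) ltac:(lra) ltac:(lra)).
  pose proof (exp_le_mono _ _ Hmk); rewrite exp_plus in *.
  pose proof (rpow_ge_0 m (k + nu - 2)); pose proof (rpow_exp_sup_gt_0 2 k).
  pose proof (exp_pos (rpow m k)).
  assert (rpow m 2 <= rpow_exp_sup 2 k * (exp 1 * exp (rpow a k))).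
  { eapply Rle_trans; [eassumption |]; apply Rmult_le_compat_l; lra. }
  nra.
Qed.

Section AngularIntegral.

Variables (nu kappa cb Cb : R) (b : R -> R).
Hypothesis Hnu : 0 < nu < 1.
Hypothesis Hkappa : nu < kappa < 1.
Hypothesis Hcb : 0 < cb.
Hypothesis HCb : 0 < Cb.
Hypothesis b_cont : forall th, 0 < Rabs th <= PI / 2 -> continuity_pt b th.
Hypothesis b_bounds : forall th, 0 < Rabs th <= PI / 2 ->
  cb * rpow (Rabs th) (-1 - nu) <= b th <= Cb * rpow (Rabs th) (-1 - nu).

Definition crude_const : R := 2 * Cb * (rpow (PI / 2) (kappa - nu) / (kappa - nu)).
Definition drift_const : R := (1 - exp (- (kappa / 150))) * cb / 4.
Definition far_const : R := 80 * Cb * rpow_exp_sup (2 - nu) kappa / (1 - nu).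
Definition growth_const : R :=
  130 + crude_const * rpow_exp_sup 2 kappa * exp 3 + far_const + crude_const.

Lemma crude_const_gt_0 : 0 < crude_const.
Proof.
  unfold crude_const; pose proof (rpow_gt_0 (PI / 2) (kappa - nu) PI2_RGT_0).
  apply Rmult_lt_0_compat; [lra | apply Rdiv_lt_0_compat; lra].
Qed.

Lemma drift_const_gt_0 : 0 < drift_const.
Proof.
  unfold drift_const; pose proof (exp_increasing (- (kappa / 150)) 0 ltac:(lra)).
  rewrite exp_0 in *; apply Rmult_lt_0_compat; [apply Rmult_lt_0_compat |]; lra.
Qed.

Lemma far_const_gt_0 : 0 < far_const.
Proof.
  unfold far_const; pose proof (rpow_exp_sup_gt_0 (2 - nu) kappa).
  apply Rdiv_lt_0_compat; [apply Rmult_lt_0_compat |]; lra.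
Qed.

Lemma growth_const_ge : 130 <= growth_const /\ far_const <= growth_const /\ crude_const <= growth_const
  /\ crude_const * rpow_exp_sup 2 kappa * exp 3 <= growth_const.
Proof.
  pose proof crude_const_gt_0 as Hcrude; pose proof far_const_gt_0.
  pose proof (Rmult_lt_0_compat _ _ (Rmult_lt_0_compat _ _ Hcrude (rpow_exp_sup_gt_0 2 kappa)) (exp_pos 3)).
  unfold growth_const; lra.
Qed.

Lemma expdiff_b_continuity_pt v V th : 0 < Rabs th <= PI / 2 ->
  continuity_pt (fun t => expdiff kappa v V t * b t) th /\
  continuity_pt (fun t => Rabs (expdiff kappa v V t) * b t) th.
Proof.
  intro Hth; pose proof (expdiff_continuity_pt kappa v V th ltac:(lra)).
  split; apply continuity_pt_mult; auto.
  apply (continuity_pt_comp (expdiff kappa v V) Rabs); [assumption | apply Rcontinuity_abs].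
Qed.

Lemma expdiff_b_dominated v V th : 0 < Rabs th <= PI / 2 ->
  Rabs (expdiff kappa v V th) * b th
  <= Cb * exp (2 * rpow (vnorm V) kappa + 2 * rpow (vnorm v) kappa) * rpow (Rabs th) (kappa - nu - 1).
Proof.
  intro Hth; destruct (b_bounds th Hth) as [Hlow Hup].
  pose proof (Rabs_expdiff_le kappa v V th ltac:(lra) ltac:(apply Rabs_le_inv; lra)).
  pose proof (rpow_ge_0 (Rabs th) kappa); pose proof (rpow_ge_0 (Rabs th) (-1 - nu)).
  replace (kappa - nu - 1) with (kappa + (-1 - nu)) by ring; rewrite rpow_plus by lra.
  set (X := exp (2 * rpow (vnorm V) kappa + 2 * rpow (vnorm v) kappa)) in *.
  replace (Cb * X * (rpow (Rabs th) kappa * rpow (Rabs th) (-1 - nu)))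
    with ((X * rpow (Rabs th) kappa) * (Cb * rpow (Rabs th) (-1 - nu))) by ring.
  apply Rmult_le_compat; [apply Rabs_pos | nra | assumption | assumption].
Qed.

Lemma improper_expdiff_b_crude v V :
  let B := crude_const * exp (2 * rpow (vnorm V) kappa + 2 * rpow (vnorm v) kappa) in
  (exists I, improper_int_sym (fun th => expdiff kappa v V th * b th) I /\ I <= B) /\
  (exists J, improper_int_sym (fun th => Rabs (expdiff kappa v V th) * b th) J /\ J <= B).
Proof.
  intro B; set (M := Cb * exp (2 * rpow (vnorm V) kappa + 2 * rpow (vnorm v) kappa)).
  assert (HM : 0 <= M) by (unfold M; pose proof (exp_pos (2 * rpow (vnorm V) kappa + 2 * rpow (vnorm v) kappa)); nra).
  assert (EB : 2 * (M * (rpow (PI / 2) (kappa - nu) / (kappa - nu))) = B)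
    by (unfold B, M, crude_const; ring).
  rewrite <- EB; split; apply (improper_int_sym_le_dominated _ M); try lra;
    intros th Hth; try apply (expdiff_b_continuity_pt v V th Hth).
  - rewrite Rabs_mult, (Rabs_right (b th)) by (destruct (b_bounds th Hth);
      pose proof (rpow_ge_0 (Rabs th) (-1 - nu)); nra).
    apply expdiff_b_dominated, Hth.
  - rewrite Rabs_mult, Rabs_Rabsolu, (Rabs_right (b th)) by (destruct (b_bounds th Hth);
      pose proof (rpow_ge_0 (Rabs th) (-1 - nu)); nra).
    apply expdiff_b_dominated, Hth.
Qed.

Lemma expdiff_b_far_singular_le v V th : 1 <= vnorm V -> 64 * vnorm v <= vnorm V ->
  0 < Rabs th <= PI / 2 ->
  expdiff kappa v V th * b th
  <= exp (rpow (vnorm V) kappa) * (rpow (vnorm V) (kappa - 1) * vnorm v * exp (rpow (vnorm v) kappa))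
     * Cb * rpow (Rabs th) (- nu).
Proof.
  intros HV Hfar Hth; destruct (b_bounds th Hth) as [Hlow Hup].
  pose proof (rpow_ge_0 (Rabs th) (-1 - nu)); assert (Hb0 : 0 <= b th) by nra.
  pose proof (expdiff_far_le kappa v V th ltac:(lra) HV Hfar Hth) as Hle.
  set (E0 := exp (rpow (vnorm V) kappa)) in *; assert (HE0 : 0 < E0) by apply exp_pos.
  set (A := rpow (vnorm V) (kappa - 1) * vnorm v * exp (rpow (vnorm v) kappa)) in *.
  assert (HA : 0 <= A).
  { unfold A; pose proof (rpow_ge_0 (vnorm V) (kappa - 1)); pose proof (vnorm_ge_0 v).
    pose proof (exp_pos (rpow (vnorm v) kappa)); repeat apply Rmult_le_pos; lra. }
  assert (0 <= E0 * A * Rabs th)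
    by (pose proof (Rabs_pos th); apply Rmult_le_pos; [apply Rmult_le_pos |]; lra).
  replace (rpow (Rabs th) (- nu)) with (Rabs th * rpow (Rabs th) (-1 - nu))
    by (rewrite Rmult_comm, rpow_mul_self by lra; f_equal; ring).
  apply Rle_trans with (E0 * A * Rabs th * b th); [apply Rmult_le_compat_r; assumption |].
  replace (E0 * A * Cb * (Rabs th * rpow (Rabs th) (-1 - nu)))
    with (E0 * A * Rabs th * (Cb * rpow (Rabs th) (-1 - nu))) by ring.
  apply Rmult_le_compat_l; assumption.
Qed.

Lemma expdiff_b_far_pointwise v V th : 1 <= vnorm V -> 64 * vnorm v <= vnorm V ->
  0 < Rabs th <= PI / 2 ->
  let E0 := exp (rpow (vnorm V) kappa) in
  let K := E0 * (rpow (vnorm V) (kappa - 1) * vnorm v * exp (rpow (vnorm v) kappa)) * Cb in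
  let y := expdiff kappa v V th * b th in
  y <= K * rpow (Rabs th) (- nu) /\
  (40 * vnorm v / vnorm V <= Rabs th -> y <= 0) /\
  (PI / 4 <= Rabs th -> y <= - (E0 * drift_const)).
Proof.
  intros HV Hfar Hth E0 K y; destruct (b_bounds th Hth) as [Hlow Hup].
  pose proof (rpow_ge_0 (Rabs th) (-1 - nu)); assert (Hb0 : 0 <= b th) by nra.
  split; [apply expdiff_b_far_singular_le; assumption | split].
  - intro Hwide.
    assert (40 * vnorm v <= vnorm V * Rabs th).
    { apply Rmult_le_compat_r with (r := vnorm V) in Hwide; [| lra].
      unfold Rdiv in Hwide; rewrite Rmult_assoc, Rinv_l in Hwide by lra; lra. }
    pose proof (expdiff_far_nonpos kappa v V th ltac:(lra) HV Hfar Hth ltac:(assumption)).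
    unfold y; nra.
  - intro Hwide; pose proof (expdiff_far_wide kappa v V th ltac:(lra) HV Hfar Hth Hwide) as Hle.
    fold E0 in Hle; assert (HE0 : 0 < E0) by apply exp_pos.
    assert (Hquarter : cb / 4 <= b th).
    { pose proof (rpow_opp_ge_quarter (Rabs th) (1 + nu) ltac:(pose proof PI_4; lra) ltac:(lra)).
      replace (- (1 + nu)) with (-1 - nu) in * by ring; nra. }
    assert (Hneg : E0 * (exp (- (kappa / 150)) - 1) <= 0).
    { pose proof (exp_increasing (- (kappa / 150)) 0 ltac:(lra)); rewrite exp_0 in *; nra. }
    replace (- (E0 * drift_const)) with (E0 * (exp (- (kappa / 150)) - 1) * (cb / 4))
      by (unfold drift_const; field).
    unfold y; apply Rle_trans with (E0 * (exp (- (kappa / 150)) - 1) * b th).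
    + apply Rmult_le_compat_r; assumption.
    + apply Rmult_le_compat_neg_l; assumption.
Qed.

Lemma far_split_bound_le v V : 1 <= vnorm V -> 64 * vnorm v <= vnorm V ->
  let E0 := exp (rpow (vnorm V) kappa) in
  let K := E0 * (rpow (vnorm V) (kappa - 1) * vnorm v * exp (rpow (vnorm v) kappa)) * Cb in
  let T := 40 * vnorm v / vnorm V in
  2 * (K * (rpow T (1 - nu) / (1 - nu)) - E0 * drift_const * (PI / 4))
  <= E0 * (far_const * rpow (vnorm V) (kappa + nu - 2) * exp (2 * rpow (vnorm v) kappa) - drift_const).
Proof.
  intros HV Hfar E0 K T; pose proof (vnorm_ge_0 v); pose proof PI2_3_2.
  assert (HE0 : 0 < E0) by apply exp_pos; pose proof drift_const_gt_0.
  set (Rk := rpow (vnorm v) kappa) in *.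
  assert (Hwidth : rpow (vnorm V) (kappa - 1) * vnorm v * rpow T (1 - nu)
                   <= 40 * rpow (vnorm V) (kappa + nu - 2) * (rpow_exp_sup (2 - nu) kappa * exp Rk)).
  { eapply Rle_trans; [apply rpow_far_width_le; lra |].
    apply Rmult_le_compat_l; [pose proof (rpow_ge_0 (vnorm V) (kappa + nu - 2)); lra |].
    apply rpow_le_rpow_exp_sup; lra. }
  assert (HKT : K * rpow T (1 - nu) * (2 / (1 - nu))
                <= E0 * (far_const * rpow (vnorm V) (kappa + nu - 2) * exp (2 * Rk))).
  { replace (2 * Rk) with (Rk + Rk) by ring; rewrite exp_plus.
    replace (K * rpow T (1 - nu) * (2 / (1 - nu)))
      with (E0 * exp Rk * Cb * (2 / (1 - nu))
            * (rpow (vnorm V) (kappa - 1) * vnorm v * rpow T (1 - nu))) by (unfold K; ring).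
    replace (E0 * (far_const * rpow (vnorm V) (kappa + nu - 2) * (exp Rk * exp Rk)))
      with (E0 * exp Rk * Cb * (2 / (1 - nu))
            * (40 * rpow (vnorm V) (kappa + nu - 2) * (rpow_exp_sup (2 - nu) kappa * exp Rk)))
      by (unfold far_const; field; lra).
    apply Rmult_le_compat_l; [| exact Hwidth].
    pose proof (exp_pos Rk); apply Rmult_le_pos; [repeat apply Rmult_le_pos |]; try lra.
    unfold Rdiv; apply Rmult_le_pos; [lra | left; apply Rinv_0_lt_compat; lra]. }
  assert (0 < E0 * drift_const) by (apply Rmult_lt_0_compat; lra).
  replace (2 * (K * (rpow T (1 - nu) / (1 - nu)) - E0 * drift_const * (PI / 4)))
    with (K * rpow T (1 - nu) * (2 / (1 - nu)) - E0 * drift_const * (PI / 2)) by (field; lra).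
  nra.
Qed.

Lemma improper_expdiff_b_far v V : 1 <= vnorm V -> 64 * vnorm v <= vnorm V ->
  exists I, improper_int_sym (fun th => expdiff kappa v V th * b th) I /\
    I <= exp (rpow (vnorm V) kappa)
         * (far_const * rpow (vnorm V) (kappa + nu - 2) * exp (2 * rpow (vnorm v) kappa) - drift_const).
Proof.
  intros HV Hfar; pose proof (vnorm_ge_0 v) as Hr; pose proof PI2_3_2.
  pose proof (far_split_bound_le v V HV Hfar) as Hsplit; cbv zeta in Hsplit.
  set (E0 := exp (rpow (vnorm V) kappa)) in *; assert (HE0 : 0 < E0) by apply exp_pos.
  set (K := E0 * (rpow (vnorm V) (kappa - 1) * vnorm v * exp (rpow (vnorm v) kappa)) * Cb) in *.
  assert (HK : 0 <= K).
  { pose proof (rpow_ge_0 (vnorm V) (kappa - 1)); pose proof (exp_pos (rpow (vnorm v) kappa)).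
    unfold K; repeat apply Rmult_le_pos; lra. }
  set (T := 40 * vnorm v / vnorm V) in *.
  assert (HT : 0 <= T < PI / 4).
  { unfold T, Rdiv; split; [apply Rmult_le_pos; [lra | left; apply Rinv_0_lt_compat; lra] |].
    apply Rle_lt_trans with (40 / 64); [| lra].
    apply Rmult_le_reg_r with (vnorm V); [lra |]; rewrite Rmult_assoc, Rinv_l; lra. }
  set (D := E0 * drift_const) in *.
  assert (HD : 0 <= D) by (pose proof drift_const_gt_0; unfold D; nra).
  destruct (improper_int_sym_le_of_halves (fun th => expdiff kappa v V th * b th)
              (Cb * exp (2 * rpow (vnorm V) kappa + 2 * rpow (vnorm v) kappa)) (kappa - nu)
              (K * (rpow T (1 - nu) / (1 - nu)) - D * (PI / 4))
              (fun t y => y <= K * rpow t (- nu) /\ (T <= t -> y <= 0) /\ (PI / 4 <= t -> y <= - D)))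
    as [I [HI HIB]]; [lra | | | | |].
  - intros th Hth; apply (expdiff_b_continuity_pt v V th Hth).
  - intros th Hth; rewrite Rabs_mult, (Rabs_right (b th)).
    + apply expdiff_b_dominated, Hth.
    + destruct (b_bounds th Hth); pose proof (rpow_ge_0 (Rabs th) (-1 - nu)); nra.
  - intros th Hth; apply (expdiff_b_far_pointwise v V th HV Hfar Hth).
  - intros g e w Hg Hbound He Hw; apply (int_on_split_le g e T K D nu w); assumption.
  - exists I; split; [exact HI | lra].
Qed.

Lemma crude_bound_le_near v V : ~ (1 <= vnorm V /\ 64 * vnorm v <= vnorm V) ->
  crude_const * exp (2 * rpow (vnorm V) kappa + 2 * rpow (vnorm v) kappa)
  <= exp (rpow (vnorm V) kappa)
     * (growth_const * rpow (Rmax (vnorm V) 1) (kappa + nu - 2) * exp (growth_const * rpow (vnorm v) kappa)).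
Proof.
  intro Hnear; pose proof (vnorm_ge_0 V); pose proof (vnorm_ge_0 v).
  pose proof (rpow_near_le kappa (vnorm V) (vnorm v) ltac:(lra) ltac:(lra) ltac:(lra) Hnear) as HA.
  pose proof (rpow_Rmax_weight_ge kappa nu (vnorm V) ltac:(lra) Hnu ltac:(lra)) as HW.
  destruct growth_const_ge as [G130 [_ [_ Gnear]]]; pose proof crude_const_gt_0.
  pose proof (rpow_ge_0 (vnorm v) kappa); pose proof (rpow_ge_0 (Rmax (vnorm V) 1) (kappa + nu - 2)).
  pose proof (rpow_exp_sup_gt_0 2 kappa).
  set (A := rpow (vnorm V) kappa) in *; set (Rk := rpow (vnorm v) kappa) in *.
  set (P := rpow (Rmax (vnorm V) 1) (kappa + nu - 2)) in *.
  set (K2 := rpow_exp_sup 2 kappa) in *; set (K0 := crude_const) in *.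
  assert (Hexp : exp (2 * A + 2 * Rk) * (exp 1 * exp A) <= exp 3 * exp A * exp (130 * Rk)).
  { rewrite <- !exp_plus; apply exp_le_mono; lra. }
  assert (Hgrow : K0 * K2 * exp 3 * P * exp (130 * Rk) <= growth_const * P * exp (growth_const * Rk)).
  { pose proof (exp_pos (130 * Rk)); pose proof (exp_le_mono (130 * Rk) (growth_const * Rk) ltac:(nra)).
    assert (0 <= K0 * K2 * exp 3) by (pose proof (exp_pos 3); apply Rmult_le_pos; [apply Rmult_le_pos |]; lra).
    apply Rmult_le_compat; [nra | lra | apply Rmult_le_compat_r; lra | lra]. }
  apply Rle_trans with (K0 * exp (2 * A + 2 * Rk) * (K2 * exp 1 * exp A * P)).
  { rewrite <- (Rmult_1_r (K0 * exp (2 * A + 2 * Rk))) at 1.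
    apply Rmult_le_compat_l; [pose proof (exp_pos (2 * A + 2 * Rk)); nra | exact HW]. }
  apply Rle_trans with (K0 * K2 * P * (exp 3 * exp A * exp (130 * Rk))).
  { replace (K0 * exp (2 * A + 2 * Rk) * (K2 * exp 1 * exp A * P))
      with (K0 * K2 * P * (exp (2 * A + 2 * Rk) * (exp 1 * exp A))) by ring.
    apply Rmult_le_compat_l; [apply Rmult_le_pos; [apply Rmult_le_pos |]; lra | exact Hexp]. }
  replace (K0 * K2 * P * (exp 3 * exp A * exp (130 * Rk)))
    with (exp A * (K0 * K2 * exp 3 * P * exp (130 * Rk))) by ring.
  apply Rmult_le_compat_l; [left; apply exp_pos | exact Hgrow].
Qed.

Lemma improper_expdiff_b_upper v V :
  exists I, improper_int_sym (fun th => expdiff kappa v V th * b th) I /\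
    I <= exp (rpow (vnorm V) kappa) *
         (- drift_const * indic_far 64 v V
          + growth_const * rpow (Rmax (vnorm V) 1) (kappa + nu - 2)
            * exp (growth_const * rpow (vnorm v) kappa)).
Proof.
  destruct (improper_expdiff_b_crude v V) as [[I0 [HI0 HI0B]] _].
  unfold indic_far; destruct (Rle_dec 1 (vnorm V)) as [HV | HV];
    [destruct (Rle_dec (64 * vnorm v) (vnorm V)) as [Hfar | Hfar] |].
  - destruct (improper_expdiff_b_far v V HV Hfar) as [I [HI HIB]].
    exists I; split; [exact HI |]; eapply Rle_trans; [exact HIB |].
    rewrite Rmax_left by lra; apply Rmult_le_compat_l; [left; apply exp_pos |].
    destruct growth_const_ge as [G130 [Gfar _]].
    pose proof (rpow_ge_0 (vnorm V) (kappa + nu - 2)); pose proof (rpow_ge_0 (vnorm v) kappa).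
    assert (far_const * rpow (vnorm V) (kappa + nu - 2) * exp (2 * rpow (vnorm v) kappa)
            <= growth_const * rpow (vnorm V) (kappa + nu - 2) * exp (growth_const * rpow (vnorm v) kappa)).
    { pose proof far_const_gt_0.
      apply Rmult_le_compat; [nra | left; apply exp_pos | nra | apply exp_le_mono; nra]. }
    lra.
  - exists I0; split; [exact HI0 |]; rewrite Rmult_0_r, Rplus_0_l.
    eapply Rle_trans; [exact HI0B |]; apply crude_bound_le_near; tauto.
  - exists I0; split; [exact HI0 |]; rewrite Rmult_0_r, Rplus_0_l.
    eapply Rle_trans; [exact HI0B |]; apply crude_bound_le_near; tauto.
Qed.

Lemma improper_abs_expdiff_b_upper v V :
  exists J, improper_int_sym (fun th => Rabs (expdiff kappa v V th) * b th) J /\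
    J <= growth_const * exp (growth_const * rpow (vnorm v) kappa)
         * exp (growth_const * rpow (vnorm V) kappa).
Proof.
  destruct (improper_expdiff_b_crude v V) as [_ [J [HJ HJB]]].
  exists J; split; [exact HJ |]; eapply Rle_trans; [exact HJB |].
  destruct growth_const_ge as [G130 [_ [Gcrude _]]]; pose proof crude_const_gt_0.
  pose proof (rpow_ge_0 (vnorm v) kappa); pose proof (rpow_ge_0 (vnorm V) kappa).
  rewrite Rmult_assoc, <- exp_plus.
  apply Rmult_le_compat; [lra | left; apply exp_pos | lra | apply exp_le_mono; nra].
Qed.

End AngularIntegral.

Theorem lemma6p4 (nu : R) (b : R -> R)
  (Hnu : 0 < nu < 1) (Hb : assumption_A nu b)
  (kappa : R) (Hk : nu < kappa < 1) :
  exists C c_k C_k : R, 0 < C /\ 0 < c_k /\ 0 < C_k /\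
    forall v V : vec2,
      (exists I, improper_int_sym (fun theta => expdiff kappa v V theta * b theta) I /\
         I <= exp (rpow (vnorm V) kappa) *
              (- c_k * indic_far C v V
               + C_k * rpow (Rmax (vnorm V) 1) (kappa + nu - 2)
                     * exp (C_k * rpow (vnorm v) kappa))) /\
      (exists J, improper_int_sym (fun theta => Rabs (expdiff kappa v V theta) * b theta) J /\
         J <= C_k * exp (C_k * rpow (vnorm v) kappa) * exp (C_k * rpow (vnorm V) kappa)).
Proof.
  destruct (assumption_A_kernel_bounds nu b Hb) as [Hcont [cb [Cb [Hcb [HCb Hbounds]]]]].
  exists 64, (drift_const kappa cb), (growth_const nu kappa Cb).
  split; [lra |]; split; [apply (drift_const_gt_0 nu); assumption |].
  split; [destruct (growth_const_ge nu kappa Cb Hnu Hk HCb); lra |].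
  intros v V; split.
  - apply (improper_expdiff_b_upper nu kappa cb Cb b); assumption.
  - apply (improper_abs_expdiff_b_upper nu kappa cb Cb b); assumption.
Qed.
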